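(* Let $\Sigma\in\mathbb{R}^{p\times p}$ be positive definite, $X\sim\mathcal{N}_p(0,\Sigma)$, $j\in[p]$ and $S\subset[p]\setminus\{j\}$. If $T_1,T_2\in\mathcal{N}_j(S)$, then $T_1\cup T_2\in\mathcal{N}_j(S)$.
   Context: For $S\subset[p]\setminus\{j\}$, $\beta_j(S)=\arg\min_{\beta\in\mathbb{R}^p,\ \operatorname{supp}(\beta)\subset S}\mathbb{E}[X_j-\beta^TX]^2$ (unique since $\Sigma$ is positive definite), and $\mathcal{N}_j(S)=\{T\subset[p]\setminus\{j\}:\beta_j(T)=\beta_j(S)\}$. *)

From HB Require Import structures.
From mathcomp Require Import all_boot all_order all_algebra.
From mathcomp Require Import reals.
From Stdlib Require Import ClassicalEpsilon.
Set Implicit Arguments. Unset Strict Implicit. Unset Printing Implicit Defensive.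
Import Order.TTheory GRing.Theory Num.Theory.
Local Open Scope ring_scope.

Definition posdef (R : realType) (p : nat) (Sigma : 'M[R]_p) : Prop :=
  Sigma^T = Sigma /\ forall x : 'cV[R]_p, x != 0 -> 0 < (x^T *m Sigma *m x) 0 0.

Definition supp_in (R : realType) (p : nat) (beta : 'cV[R]_p) (S : {set 'I_p}) : Prop :=
  forall i : 'I_p, i \notin S -> beta i 0 = 0.

(* E[X_j - beta^T X]^2 for X ~ N_p(0, Sigma):
   = (e_j - beta)^T Sigma (e_j - beta). *)
Definition risk (R : realType) (p : nat) (Sigma : 'M[R]_p) (j : 'I_p)
    (beta : 'cV[R]_p) : R :=
  let v := delta_mx j 0 - beta in (v^T *m Sigma *m v) 0 0.

Definition is_argmin (R : realType) (p : nat) (Sigma : 'M[R]_p) (j : 'I_p)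
    (S : {set 'I_p}) (beta : 'cV[R]_p) : Prop :=
  supp_in beta S /\
  forall gamma : 'cV[R]_p, supp_in gamma S -> risk Sigma j beta <= risk Sigma j gamma.

(* beta_j(S): the (unique, for positive definite Sigma) minimizer. *)
Definition beta_j (R : realType) (p : nat) (Sigma : 'M[R]_p) (j : 'I_p)
    (S : {set 'I_p}) : 'cV[R]_p :=
  epsilon (inhabits 0) (is_argmin Sigma j S).

Definition in_N (R : realType) (p : nat) (Sigma : 'M[R]_p) (j : 'I_p)
    (S T : {set 'I_p}) : Prop :=
  j \notin T /\ beta_j Sigma j T = beta_j Sigma j S.

From HB Require Import structures.
From mathcomp Require Import all_boot all_order all_algebra.
From mathcomp Require Import reals.
From Stdlib Require Import ClassicalEpsilon.
From mathcomp Require Import ring.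
Set Implicit Arguments. Unset Strict Implicit. Unset Printing Implicit Defensive.
Import Order.TTheory GRing.Theory Num.Theory.
Local Open Scope ring_scope.

(* beta_j(T) is characterised by the normal equations: beta is supported on T
   and the residual covariance Sigma (e_j - beta) vanishes on T.  Both
   conditions are preserved under taking unions of the sets T, and a vector
   satisfying them is the unique minimiser of the risk over T (Pythagoras for
   the inner product given by Sigma). *)

Section QuadraticForm.

Variables (R : comNzRingType) (p : nat) (Sigma : 'M[R]_p).

Definition bform (u v : 'cV[R]_p) : R := (u^T *m Sigma *m v) 0 0.

Definition qform (v : 'cV[R]_p) : R := bform v v.

Hypothesis Sigma_sym : Sigma^T = Sigma.

Lemma bformC (u v : 'cV[R]_p) : bform u v = bform v u.
Proof.
have tr_bform : (v^T *m Sigma *m u)^T = u^T *m Sigma *m v.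
  by rewrite !trmx_mul trmxK Sigma_sym mulmxA.
by rewrite /bform -tr_bform mxE.
Qed.

Lemma qformD (u w : 'cV[R]_p) :
  qform (u + w) = qform u + 2 * bform w u + qform w.
Proof.
rewrite /qform /bform mulmxDr (raddfD (@trmx _ _ _) u w) !mulmxDl.
rewrite [in LHS]mxE [X in X + _]mxE [X in _ + X]mxE.
rewrite -/(bform u u) -/(bform u w) -/(bform w u) -/(bform w w) (bformC u w).
ring.
Qed.

End QuadraticForm.

Section NormalEquations.

Variables (R : realType) (p : nat) (Sigma : 'M[R]_p) (j : 'I_p).

Definition normal_eqs (T : {set 'I_p}) (b : 'cV[R]_p) : Prop :=
  supp_in b T /\ forall i, i \in T -> (Sigma *m (delta_mx j 0 - b)) i 0 = 0.

Lemma supp_inB (T : {set 'I_p}) (u v : 'cV[R]_p) :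
  supp_in u T -> supp_in v T -> supp_in (u - v) T.
Proof. by move=> su sv i iT; rewrite !mxE su // sv // subr0. Qed.

Lemma bform_supp_in_eq0 (T : {set 'I_p}) (h v : 'cV[R]_p) :
  supp_in h T -> (forall i, i \in T -> (Sigma *m v) i 0 = 0) ->
  bform Sigma h v = 0.
Proof.
move=> sh Sv; rewrite /bform -mulmxA mxE; apply: big1 => k _; rewrite mxE.
by case: (boolP (k \in T)) => kT; [rewrite Sv // mulr0 | rewrite sh // mul0r].
Qed.

Lemma normal_eqsU (T1 T2 : {set 'I_p}) (b : 'cV[R]_p) :
  normal_eqs T1 b -> normal_eqs T2 b -> normal_eqs (T1 :|: T2) b.
Proof.
move=> [s1 r1] [s2 r2]; split=> i; rewrite in_setU.
  by rewrite negb_or => /andP[/s1].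
by case/orP; [exact: r1 | exact: r2].
Qed.

Hypothesis Sigma_pd : posdef Sigma.

Lemma qform_ge0 (w : 'cV[R]_p) : 0 <= qform Sigma w.
Proof.
have [->|w_neq0] := eqVneq w 0; first by rewrite /qform /bform mulmx0 mxE.
by apply: ltW; apply: Sigma_pd.2.
Qed.

Lemma qform_eq0 (w : 'cV[R]_p) : qform Sigma w <= 0 -> w = 0.
Proof.
move=> w_le0; apply/eqP; apply: contraLR w_le0 => /Sigma_pd.2 w_gt0.
by rewrite -ltNge.
Qed.

Lemma risk_normal_eqs (T : {set 'I_p}) (b a : 'cV[R]_p) :
  normal_eqs T b -> supp_in a T ->
  risk Sigma j a = risk Sigma j b + qform Sigma (b - a).
Proof.
move=> [sb rb] sa.
change (qform Sigma (delta_mx j 0 - a) =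
        qform Sigma (delta_mx j 0 - b) + qform Sigma (b - a)).
have -> : delta_mx j 0 - a = (delta_mx j 0 - b) + (b - a) by rewrite addrA subrK.
rewrite [LHS]qformD; last exact: Sigma_pd.1.
by rewrite (bform_supp_in_eq0 (supp_inB sb sa) rb) mulr0 addr0.
Qed.

Lemma normal_eqs_argmin (T : {set 'I_p}) (b : 'cV[R]_p) :
  normal_eqs T b -> is_argmin Sigma j T b.
Proof.
move=> nb; split=> [|a sa]; first exact: nb.1.
by rewrite (risk_normal_eqs nb sa) lerDl qform_ge0.
Qed.

Lemma argmin_normal_eqs (T : {set 'I_p}) (b a : 'cV[R]_p) :
  normal_eqs T b -> is_argmin Sigma j T a -> a = b.
Proof.
move=> nb [sa min_a]; have := min_a b nb.1.
rewrite (risk_normal_eqs nb sa) gerDl => /qform_eq0 /eqP.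
by rewrite subr_eq0 => /eqP.
Qed.

(* The normal equations in matrix form: the rows indexed by T are those of
   Sigma restricted to T x T, the remaining rows force b i = 0. *)
Definition normal_mx (T : {set 'I_p}) : 'M[R]_p :=
  \matrix_(i, k) if i \in T then (if k \in T then Sigma i k else 0)
                 else (i == k)%:R.

Definition normal_rhs (T : {set 'I_p}) : 'cV[R]_p :=
  \col_i if i \in T then Sigma i j else 0.

Lemma normal_mx_unit (T : {set 'I_p}) : normal_mx T \in unitmx.
Proof.
rewrite unitmxE unitfE; apply/negP => /det0P[v v_neq0 vM].
have vM0 k : \sum_i v 0 i * normal_mx T i k = 0.
  by have := congr1 (fun A : 'rV[R]_p => A 0 k) vM; rewrite !mxE.
have v_out k : k \notin T -> v 0 k = 0.
  move=> kT; rewrite -(vM0 k) (bigD1 k) //= big1 ?addr0.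
    by rewrite mxE (negbTE kT) eqxx mulr1.
  move=> i ik; rewrite mxE; case: (i \in T); first by rewrite (negbTE kT) mulr0.
  by rewrite (negbTE ik) mulr0.
have v_in k : k \in T -> \sum_i v 0 i * Sigma i k = 0.
  move=> kT; rewrite -[RHS](vM0 k); apply: eq_bigr => i _; rewrite mxE kT.
  by case: (boolP (i \in T)) => iT //; rewrite v_out // !mul0r.
have := Sigma_pd.2 (v^T); rewrite trmx_eq0 => /(_ v_neq0).
rewrite trmxK mxE big1 ?ltxx // => k _; rewrite !mxE.
case: (boolP (k \in T)) => kT; last by rewrite v_out // mulr0.
by rewrite v_in // mul0r.
Qed.

Lemma normal_eqs_exists (T : {set 'I_p}) : exists b, normal_eqs T b.
Proof.
pose b := invmx (normal_mx T) *m normal_rhs T.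
have Mb i : \sum_k normal_mx T i k * b k 0 = normal_rhs T i 0.
  have := mulKVmx (normal_mx_unit T) (normal_rhs T).
  by move/(congr1 (fun A : 'cV[R]_p => A i 0)); rewrite !mxE.
clearbody b.
have sb : supp_in b T.
  move=> i iT; have := Mb i; rewrite mxE ifN // => <-.
  rewrite (bigD1 i) //= big1 ?addr0; first by rewrite mxE (negbTE iT) eqxx mul1r.
  by move=> k ki; rewrite mxE (negbTE iT) eq_sym (negbTE ki) mul0r.
exists b; split=> // i iT.
apply/eqP; rewrite mulmxBr -colE !mxE subr_eq0.
have := Mb i; rewrite mxE iT => <-.
apply/eqP; apply: eq_bigr => k _; rewrite mxE iT.
by case: (boolP (k \in T)) => kT //; rewrite sb // !mulr0.
Qed.

Lemma beta_j_argmin (T : {set 'I_p}) (b : 'cV[R]_p) :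
  normal_eqs T b -> is_argmin Sigma j T (beta_j Sigma j T).
Proof. by move=> nb; apply: epsilon_spec; exists b; exact: normal_eqs_argmin. Qed.

Lemma normal_eqs_beta_j (T : {set 'I_p}) (b : 'cV[R]_p) :
  normal_eqs T b -> beta_j Sigma j T = b.
Proof. by move=> nb; exact: argmin_normal_eqs nb (beta_j_argmin nb). Qed.

Lemma beta_j_normal_eqs (T : {set 'I_p}) : normal_eqs T (beta_j Sigma j T).
Proof. by have [b nb] := normal_eqs_exists T; rewrite (normal_eqs_beta_j nb). Qed.

End NormalEquations.

Theorem lemma5 (R : realType) (p : nat) (Sigma : 'M[R]_p) (j : 'I_p)
    (S T1 T2 : {set 'I_p}) :
  posdef Sigma -> j \notin S ->
  in_N Sigma j S T1 -> in_N Sigma j S T2 -> in_N Sigma j S (T1 :|: T2).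
Proof.
move=> Sigma_pd _ [jT1 beta1] [jT2 beta2]; split.
  by rewrite in_setU negb_or jT1 jT2.
apply: (normal_eqs_beta_j Sigma_pd); apply: normal_eqsU.
  by rewrite -beta1; exact: beta_j_normal_eqs.
by rewrite -beta2; exact: beta_j_normal_eqs.
Qed.
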